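(* Let $G$ be any connected graph on $n$ nodes, $K=K_n$ the complete graph on the same $n$ nodes, and $v\in\mathbb R^n$ any initial vector. Run the modified process (defined below) on $G$ and on $K$, both from $v$, and let $T_G(t)=\|v_G(t)-\bar v\|_1$, $T_K(t)=\|v_K(t)-\bar v\|_1$. Then $\mathbb E_v[T_K(t)]\le\mathbb E_v[T_G(t)]$ for all $t\ge0$.
   Context: Modified averaging process on a graph $H$ with vertex set $\{1,\dots,n\}$: the state vector $v_H(t)\in\mathbb R^n$ starts at $v_H(0)=v$; at each step an unordered pair $\{i,j\}$ of distinct vertices is chosen uniformly at random among all $\binom n2$ pairs (independently of previous steps); if $\{i,j\}$ is an edge of $H$, both $v_i$ and $v_j$ are replaced by $(v_i+v_j)/2$, otherwise the state is unchanged. $\bar v=(a,\dots,a)^T$ with $a=\frac1n\sum_i v_i$. Expectation is over the random sequence of chosen pairs. *)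

From mathcomp Require Import all_boot all_order all_algebra.
Set Implicit Arguments. Unset Strict Implicit. Unset Printing Implicit Defensive.
Import Order.TTheory GRing.Theory Num.Theory.
Local Open Scope ring_scope.

Definition simple_graph (n : nat) (e : rel 'I_n) : Prop :=
  symmetric e /\ irreflexive e.

Definition connected_graph (n : nat) (e : rel 'I_n) : Prop :=
  forall i j : 'I_n, connect e i j.

Definition complete_graph (n : nat) : rel 'I_n := fun i j => i != j.

Definition avg_step (R : realFieldType) (n : nat) (e : rel 'I_n) (i j : 'I_n)
  (v : {ffun 'I_n -> R}) : {ffun 'I_n -> R} :=
  if e i j then [ffun k => if (k == i) || (k == j) then (v i + v j) / 2 else v k]
  else v.

(* Expectation of f(v_H(t)) for the process started at v: at each step an
   unordered pair {i,j} (i < j) is chosen uniformly among the 'C(n,2) pairs,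
   independently.  Defined by conditioning on the first chosen pair. *)
Fixpoint proc_expect (R : realFieldType) (n : nat) (e : rel 'I_n)
  (f : {ffun 'I_n -> R} -> R) (t : nat) (v : {ffun 'I_n -> R}) : R :=
  match t with
  | 0 => f v
  | t'.+1 => ('C(n, 2))%:R^-1 *
      \sum_(i < n) \sum_(j < n | (i < j)%N) proc_expect e f t' (avg_step e i j v)
  end.

Definition mean (R : realFieldType) (n : nat) (v : {ffun 'I_n -> R}) : R :=
  (\sum_(k < n) v k) / n%:R.

Definition dist1_const (R : realFieldType) (n : nat) (a : R) (w : {ffun 'I_n -> R}) : R :=
  \sum_(k < n) `|w k - a|.

(** For the complete graph, averaging along a pair {i, j} replaces w by the
    midpoint of w and its image under the transposition (i j).  Hence every
    permutation-invariant, midpoint-convex functional f satisfies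
    f (avg_step K i j w) <= f w, while a step of the process on G either
    coincides with the step on K or leaves the state unchanged; so one step
    on K does at least as well as one step on G.  The one-step expectation
    operator of K preserves permutation invariance (a permutation only
    relabels the pairs it averages over), and every one-step expectation
    operator preserves midpoint convexity (averaging is linear), so an
    induction on t compares the two expectations.  The l1 distance to a
    constant vector is such a functional. *)
From mathcomp Require Import all_boot all_order all_algebra perm.
From mathcomp Require Import ring lra.
Import Order.TTheory GRing.Theory Num.Theory.
Local Open Scope ring_scope.

Lemma sum_sym_pairs {M : nmodType} {n : nat} (F : 'I_n -> 'I_n -> M) :
  (forall i j, F i j = F j i) ->
  \sum_(i < n) \sum_(j < n) F i j =
  (\sum_(i < n) \sum_(j < n | (i < j)%N) F i j) *+ 2 + \sum_(i < n) F i i.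
Proof.
move=> Fsym.
have split_row i : \sum_(j < n) F i j =
    \sum_(j < n | (i < j)%N) F i j + \sum_(j < n | (j < i)%N) F i j + F i i.
  rewrite (bigID (fun j : 'I_n => (i < j)%N)) /= -addrA; congr (_ + _).
  rewrite (bigD1 i) /= ?ltnn // addrC; congr (_ + _).
  by apply: eq_bigl => j; rewrite -val_eqE /=; case: ltngtP.
rewrite (eq_bigr _ (fun i _ => split_row i)) !big_split /= mulr2n.
congr (_ + _ + _); rewrite (exchange_big_dep xpredT) //=.
by apply: eq_bigr => i _; apply: eq_bigr => j _; rewrite Fsym.
Qed.

Lemma sum_sym_pairs_perm {R : numDomainType} {n : nat}
    (F : 'I_n -> 'I_n -> R) (s : {perm 'I_n}) :
  (forall i j, F i j = F j i) ->
  \sum_(i < n) \sum_(j < n | (i < j)%N) F (s i) (s j) =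
  \sum_(i < n) \sum_(j < n | (i < j)%N) F i j.
Proof.
move=> Fsym.
have reindex_full : \sum_(i < n) \sum_(j < n) F (s i) (s j) =
    \sum_(i < n) \sum_(j < n) F i j.
  rewrite [RHS](reindex_inj (@perm_inj _ s)); apply: eq_bigr => i _.
  by rewrite [RHS](reindex_inj (@perm_inj _ s)).
have reindex_diag : \sum_(i < n) F (s i) (s i) = \sum_(i < n) F i i.
  by rewrite [RHS](reindex_inj (@perm_inj _ s)).
move: reindex_full.
rewrite (sum_sym_pairs _ Fsym) (sum_sym_pairs _ (fun i j => Fsym (s i) (s j))).
by rewrite reindex_diag => /addIr /eqP; rewrite eqrMn2r => /eqP.
Qed.

Section AveragingProcess.

Variables (R : realFieldType) (n : nat).
Notation V := {ffun 'I_n -> R}.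
Notation K := (@complete_graph n).

Definition permute (s : {perm 'I_n}) (w : V) : V := [ffun k => w (s k)].

Definition midpoint (w u : V) : V := [ffun k => (w k + u k) / 2].

Definition perm_invariant (f : V -> R) : Prop :=
  forall s w, f (permute s w) = f w.

Definition midconvex (f : V -> R) : Prop :=
  forall w u, f (midpoint w u) <= (f w + f u) / 2.

Definition step_expect (e : rel 'I_n) (f : V -> R) (w : V) : R :=
  ('C(n, 2))%:R^-1 * \sum_(i < n) \sum_(j < n | (i < j)%N) f (avg_step e i j w).

Lemma proc_expectS e f t :
  proc_expect e f t.+1 = step_expect e (proc_expect e f t).
Proof. by []. Qed.

Lemma avg_step_permute s i j w :
  avg_step K i j (permute s w) = permute s (avg_step K (s i) (s j) w).
Proof.
rewrite /avg_step /complete_graph (inj_eq perm_inj); case: (i != j) => //.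
by apply/ffunP => k; rewrite !ffunE !(inj_eq perm_inj); case: ifP; rewrite ?ffunE.
Qed.

Lemma avg_step_midpoint e i j w u :
  avg_step e i j (midpoint w u) = midpoint (avg_step e i j w) (avg_step e i j u).
Proof.
rewrite /avg_step; case: (e i j) => //.
by apply/ffunP => k; rewrite !ffunE; case: ifP => _; rewrite ?ffunE //; field.
Qed.

Lemma avg_step_complete_tperm i j w : i != j ->
  avg_step K i j w = midpoint w (permute (tperm i j) w).
Proof.
move=> neq_ij; rewrite /avg_step /complete_graph neq_ij.
apply/ffunP => k; rewrite !ffunE.
have [->|neq_ki] := eqVneq k i; first by rewrite tpermL.
have [->|neq_kj] := eqVneq k j; first by rewrite tpermR addrC.
by rewrite tpermD 1?eq_sym //; field.
Qed.

Lemma avg_step_complete_sym i j (w : V) : avg_step K i j w = avg_step K j i w.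
Proof.
rewrite /avg_step /complete_graph eq_sym; case: (j != i) => //.
by apply/ffunP => k; rewrite !ffunE orbC addrC.
Qed.

Lemma avg_step_complete_le f i j w :
  perm_invariant f -> midconvex f -> i != j -> f (avg_step K i j w) <= f w.
Proof.
move=> f_inv f_cvx neq_ij; rewrite avg_step_complete_tperm //.
by apply: le_trans (f_cvx _ _) _; rewrite f_inv; lra.
Qed.

Lemma step_expect_monotone e f g w :
  (forall x, f x <= g x) -> step_expect e f w <= step_expect e g w.
Proof.
move=> le_fg; rewrite ler_wpM2l ?invr_ge0 ?ler0n //.
by apply: ler_sum => i _; apply: ler_sum.
Qed.

Lemma step_expect_perm_invariant f :
  perm_invariant f -> perm_invariant (step_expect K f).
Proof.
move=> f_inv s w; congr (_ * _).
under eq_bigr => i _ do under eq_bigr => j _ do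
  rewrite avg_step_permute f_inv.
apply: (sum_sym_pairs_perm (fun i j => f (avg_step K i j w))) => i j.
by rewrite avg_step_complete_sym.
Qed.

Lemma step_expect_midconvex e f : midconvex f -> midconvex (step_expect e f).
Proof.
move=> f_cvx w u; rewrite -mulrDr -mulrA ler_wpM2l ?invr_ge0 ?ler0n //.
rewrite -big_split mulr_suml; apply: ler_sum => i _.
rewrite -big_split mulr_suml; apply: ler_sum => j _.
by rewrite avg_step_midpoint.
Qed.

Lemma step_expect_complete_le e f w :
  perm_invariant f -> midconvex f -> step_expect K f w <= step_expect e f w.
Proof.
move=> f_inv f_cvx; rewrite ler_wpM2l ?invr_ge0 ?ler0n //.
apply: ler_sum => i _; apply: ler_sum => j lt_ij.
have neq_ij : i != j by rewrite -val_eqE /= neq_ltn lt_ij.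
rewrite {2}/avg_step; case: ifP => e_ij; last exact: avg_step_complete_le.
by rewrite /avg_step /complete_graph neq_ij.
Qed.

Lemma proc_expect_complete_invariant_midconvex f t :
  perm_invariant f -> midconvex f ->
  perm_invariant (proc_expect K f t) /\ midconvex (proc_expect K f t).
Proof.
move=> f_inv f_cvx; elim: t => [|t [IHinv IHcvx]]; first by split.
by rewrite proc_expectS; split;
  [exact: step_expect_perm_invariant | exact: step_expect_midconvex].
Qed.

Lemma proc_expect_complete_le e f t w :
  perm_invariant f -> midconvex f -> proc_expect K f t w <= proc_expect e f t w.
Proof.
move=> f_inv f_cvx; elim: t w => [|t IH] w; first exact: lexx.
have [IHinv IHcvx] := proc_expect_complete_invariant_midconvex f t f_inv f_cvx.
rewrite !proc_expectS.
apply: le_trans (step_expect_complete_le e _ w IHinv IHcvx) _.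
exact: step_expect_monotone.
Qed.

Lemma dist1_const_perm_invariant a : perm_invariant (dist1_const a).
Proof.
move=> s w; rewrite /dist1_const [RHS](reindex_inj (@perm_inj _ s)).
by apply: eq_bigr => k _; rewrite ffunE.
Qed.

Lemma dist1_const_midconvex a : midconvex (dist1_const a).
Proof.
move=> w u; rewrite /dist1_const -big_split mulr_suml; apply: ler_sum => k _.
have -> : midpoint w u k - a = ((w k - a) + (u k - a)) / 2.
  by rewrite ffunE; field.
rewrite normrM (@ger0_norm _ 2^-1) ?invr_ge0 ?ler0n //.
rewrite ler_wpM2r ?invr_ge0 ?ler0n //; exact: ler_normD.
Qed.

End AveragingProcess.

Theorem theorem9 (R : realFieldType) (n : nat) (G : rel 'I_n)
  (v : {ffun 'I_n -> R}) :
  (1 < n)%N -> simple_graph G -> connected_graph G ->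
  forall t : nat,
    proc_expect (@complete_graph n) (dist1_const (mean v)) t v
    <= proc_expect G (dist1_const (mean v)) t v.
Proof.
move=> _ _ _ t; apply: proc_expect_complete_le.
- exact: dist1_const_perm_invariant.
- exact: dist1_const_midconvex.
Qed.
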